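(* Let $\mathbb{T}$ be a time scale, $a,b\in\mathbb{T}$ with $a<b$, $B\in\mathbb{R}$, and let $\varphi:\mathbb{R}\to\mathbb{R}$ be positive and continuous. For $\alpha\in\mathbb{R}\setminus\{0,1\}$ consider the functional $$\mathcal{F}(y)=\int_a^b \left[\left\{\int_0^1\varphi\big(y(t)+h\mu(t)y^\Delta(t)\big)\,dh\right\} y^\Delta(t)\right]^\alpha\Delta t,$$ defined on all $C^1_{\mathrm{rd}}$-functions $y:[a,b]_{\mathbb{T}}\to\mathbb{R}$ satisfying $y^\Delta(t)>0$ on $[a,b]^\kappa_{\mathbb{T}}$, $y(a)=0$ and $y(b)=B$. Let $G(x)=\int_0^x\varphi(s)\,ds$ for $x\geq 0$, let $G^{-1}$ be its inverse, and let $C=\frac{\int_0^B\varphi(s)\,ds}{b-a}$. (i) If $\alpha<0$ or $\alpha>1$, then the minimum of $\mathcal{F}$ is attained at $y(t)=G^{-1}(C(t-a))$, $t\in[a,b]_{\mathbb{T}}$, and $\mathcal{F}_{\min}=(b-a)C^\alpha$. (ii) If $0<\alpha<1$, then the maximum of $\mathcal{F}$ is attained at $y(t)=G^{-1}(C(t-a))$, $t\in[a,b]_{\mathbb{T}}$, and $\mathcal{F}_{\max}=(b-a)C^\alpha$.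
   Context: A time scale $\mathbb{T}$ is a nonempty closed subset of $\mathbb{R}$; $[a,b]_{\mathbb{T}}=[a,b]\cap\mathbb{T}$. $\sigma(t)=\inf\{s\in\mathbb{T}:s>t\}$ is the forward jump operator and $\mu(t)=\sigma(t)-t$ the graininess. $[a,b]^\kappa_{\mathbb{T}}$ equals $[a,b]_{\mathbb{T}}$ with $b$ removed if $b$ is left-scattered, and $[a,b]_{\mathbb{T}}$ otherwise. $y^\Delta$ denotes the delta (Hilger) derivative: $y^\Delta(t)=\lim_{s\to t,\,s\in\mathbb{T}}\frac{y(\sigma(t))-y(s)}{\sigma(t)-s}$ (so $y^\Delta=y'$ on $\mathbb{R}$ and $y^\Delta(t)=y(t+1)-y(t)$ on $\mathbb{Z}$). $C^1_{\mathrm{rd}}$ denotes functions that are delta differentiable on $[a,b]^\kappa_{\mathbb{T}}$ with rd-continuous delta derivative (rd-continuous: continuous at right-dense points, finite left limits at left-dense points). $\int_a^b\cdot\,\Delta t$ is the delta integral. *)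

From Stdlib Require Import Reals Lra ClassicalEpsilon.
From Coquelicot Require Import Coquelicot.
Open Scope R_scope.

Definition tsI (T : R -> Prop) (a b : R) (t : R) : Prop := T t /\ a <= t <= b.

(** Forward / backward jump operators of a set S of reals
    (conventions: inf empty = t, sup empty = t, i.e. sigma(max S) = max S). *)
Definition sigma (S : R -> Prop) (t : R) : R :=
  match Glb_Rbar (fun s => S s /\ t < s) with Finite r => r | _ => t end.
Definition rho (S : R -> Prop) (t : R) : R :=
  match Lub_Rbar (fun s => S s /\ s < t) with Finite r => r | _ => t end.
Definition mu (S : R -> Prop) (t : R) : R := sigma S t - t.

(** [a,b]^kappa_T : remove b if b is left-scattered. *)
Definition kappa (T : R -> Prop) (a b : R) (t : R) : Prop :=
  tsI T a b t /\ (t < b \/ rho (tsI T a b) b = b).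

Definition is_delta_deriv (S : R -> Prop) (y : R -> R) (t f : R) : Prop :=
  forall eps : R, 0 < eps -> exists delta : R, 0 < delta /\
    forall s : R, S s -> Rabs (s - t) < delta ->
      Rabs (y (sigma S t) - y s - f * (sigma S t - s)) <= eps * Rabs (sigma S t - s).

Definition rd_continuous (S D : R -> Prop) (a b : R) (f : R -> R) : Prop :=
  forall t : R, D t ->
    ((t < b /\ sigma S t = t) ->
       forall eps, 0 < eps -> exists delta, 0 < delta /\
         forall s, D s -> Rabs (s - t) < delta -> Rabs (f s - f t) < eps) /\
    ((a < t /\ rho S t = t) ->
       exists L : R, forall eps, 0 < eps -> exists delta, 0 < delta /\
         forall s, D s -> t - delta < s < t -> Rabs (f s - L) < eps).

(** Delta integral over [a,b]_T via a delta antiderivative (Bohner-Peterson Def. 1.71):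
    v = int_a^b f(t) Delta t iff v = F b - F a for some F with F^Delta = f on [a,b]^kappa_T. *)
Definition is_delta_integral (T : R -> Prop) (a b : R) (f : R -> R) (v : R) : Prop :=
  exists F : R -> R,
    (forall t, kappa T a b t -> is_delta_deriv (tsI T a b) F t (f t)) /\
    v = F b - F a.

Definition admissible (T : R -> Prop) (a b B : R) (y yd : R -> R) : Prop :=
  (forall t, kappa T a b t -> is_delta_deriv (tsI T a b) y t (yd t)) /\
  rd_continuous (tsI T a b) (kappa T a b) a b yd /\
  (forall t, kappa T a b t -> 0 < yd t) /\
  y a = 0 /\ y b = B.

Definition integrand (T : R -> Prop) (a b alpha : R) (phi : R -> R) (y yd : R -> R)
  (t : R) : R :=
  Rpower (RInt (fun h => phi (y t + h * mu (tsI T a b) t * yd t)) 0 1 * yd t) alpha.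

Definition functional_value (T : R -> Prop) (a b alpha : R) (phi : R -> R)
  (y yd : R -> R) (v : R) : Prop :=
  is_delta_integral T a b (integrand T a b alpha phi y yd) v.

Definition G (phi : R -> R) (x : R) : R := RInt phi 0 x.
Definition Ginv (phi : R -> R) (x : R) : R :=
  epsilon (inhabits 0) (fun y => 0 <= y /\ G phi y = x).

From Pilot Require Import Defs.
From Stdlib Require Import Reals Lra Classical ClassicalEpsilon.
From Coquelicot Require Import Coquelicot.
(* Re-import so that the jump operator [sigma] shadows Stdlib's finite sum. *)
Import Pilot.Defs.
Open Scope R_scope.

(* Put [P t = (int_0^1 phi (y t + h mu(t) y^Delta t) dh) * y^Delta t], so that the
   functional is [int_a^b P^alpha].  A chain rule on time scales shows that [P]
   is the delta derivative of [G (y t)], hence [int_a^b P = G B = C (b - a)]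
   for every admissible [y].  Since [alpha (alpha - 1) (P^alpha - C^alpha -
   alpha C^(alpha - 1) (P - C)) >= 0] (tangent line of [P^alpha] at [C]), and a
   function with nonnegative delta derivative is nondecreasing, integrating gives
   [alpha (alpha - 1) (F y - (b - a) C^alpha) >= 0].  Equality holds for
   [y0 t = G^-1 (C (t - a))], for which [G (y0 t)] is linear and [P = C]. *)

Lemma Glb_Rbar_finite (E : R -> Prop) x0 (l : R) : E x0 -> is_lb_Rbar E l ->
  exists r, Glb_Rbar E = Finite r /\ l <= r <= x0.
Proof.
  intros Ex0 Hl. destruct (Glb_Rbar_correct E) as [Hlb Hglb].
  specialize (Hlb _ Ex0). specialize (Hglb _ Hl).
  destruct (Glb_Rbar E) as [r| |]; simpl in *; try contradiction.
  exists r; repeat split; assumption.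
Qed.

Lemma Glb_Rbar_le (E : R -> Prop) r x : Glb_Rbar E = Finite r -> E x -> r <= x.
Proof.
  intros Hr Ex. destruct (Glb_Rbar_correct E) as [Hlb _].
  rewrite Hr in Hlb. exact (Hlb x Ex).
Qed.

Lemma Glb_Rbar_approx (E : R -> Prop) r e : Glb_Rbar E = Finite r -> 0 < e ->
  exists x, E x /\ x < r + e.
Proof.
  intros Hr He. apply NNPP. intros Hno.
  destruct (Glb_Rbar_correct E) as [_ Hglb].
  assert (Hle : Rbar_le (Finite (r + e)) (Glb_Rbar E)).
  { apply Hglb. intros x Ex. simpl. apply Rnot_lt_le. intros Hx. apply Hno. now exists x. }
  rewrite Hr in Hle. simpl in Hle. lra.
Qed.

Lemma Lub_Rbar_finite (E : R -> Prop) x0 (l : R) : E x0 -> is_ub_Rbar E l ->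
  exists r, Lub_Rbar E = Finite r /\ x0 <= r <= l.
Proof.
  intros Ex0 Hl. destruct (Lub_Rbar_correct E) as [Hub Hlub].
  specialize (Hub _ Ex0). specialize (Hlub _ Hl).
  destruct (Lub_Rbar E) as [r| |]; simpl in *; try contradiction.
  exists r; repeat split; assumption.
Qed.

Lemma Lub_Rbar_ge (E : R -> Prop) r x : Lub_Rbar E = Finite r -> E x -> x <= r.
Proof.
  intros Hr Ex. destruct (Lub_Rbar_correct E) as [Hub _].
  rewrite Hr in Hub. exact (Hub x Ex).
Qed.

Lemma Lub_Rbar_approx (E : R -> Prop) r e : Lub_Rbar E = Finite r -> 0 < e ->
  exists x, E x /\ r - e < x.
Proof.
  intros Hr He. apply NNPP. intros Hno.
  destruct (Lub_Rbar_correct E) as [_ Hlub].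
  assert (Hle : Rbar_le (Lub_Rbar E) (Finite (r - e))).
  { apply Hlub. intros x Ex. simpl. apply Rnot_lt_le. intros Hx. apply Hno. now exists x. }
  rewrite Hr in Hle. simpl in Hle. lra.
Qed.

Lemma closed_approx (T : R -> Prop) z : closed T ->
  (forall e, 0 < e -> exists x, T x /\ Rabs (x - z) < e) -> T z.
Proof.
  intros HT Hz. apply HT. intros [e Hout].
  destruct (Hz e (cond_pos e)) as [x [Tx Hx]].
  exact (Hout x Hx Tx).
Qed.

Lemma closed_Glb_Rbar (T E : R -> Prop) r : closed T -> (forall x, E x -> T x) ->
  Glb_Rbar E = Finite r -> T r.
Proof.
  intros HT HET Hr. apply closed_approx; auto. intros e He.
  destruct (Glb_Rbar_approx E r e Hr He) as [x [Ex Hx]].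
  exists x. split; auto. apply Rabs_lt_between'. pose proof (Glb_Rbar_le E r x Hr Ex). lra.
Qed.

Lemma closed_Lub_Rbar (T E : R -> Prop) r : closed T -> (forall x, E x -> T x) ->
  Lub_Rbar E = Finite r -> T r.
Proof.
  intros HT HET Hr. apply closed_approx; auto. intros e He.
  destruct (Lub_Rbar_approx E r e Hr He) as [x [Ex Hx]].
  exists x. split; auto. apply Rabs_lt_between'. pose proof (Lub_Rbar_ge E r x Hr Ex). lra.
Qed.

Section JumpOperators.
Variable S : R -> Prop.

Lemma sigma_ge t : t <= sigma S t.
Proof.
  unfold sigma. destruct (Glb_Rbar_correct (fun s => S s /\ t < s)) as [_ Hglb].
  assert (Ht : Rbar_le (Finite t) (Glb_Rbar (fun s => S s /\ t < s))).
  { apply Hglb. intros x [_ Hx]. simpl. lra. }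
  destruct (Glb_Rbar _); simpl in *; lra.
Qed.

Lemma sigma_le t s : S s -> t < s -> sigma S t <= s.
Proof.
  intros Ss Hts. destruct (Glb_Rbar_finite (fun s => S s /\ t < s) s t) as [r [Hr Hrs]].
  - now split.
  - intros x [_ Hx]. simpl. lra.
  - unfold sigma. rewrite Hr. lra.
Qed.

Lemma sigma_max t : (forall s, S s -> s <= t) -> sigma S t = t.
Proof.
  intros Hmax. unfold sigma.
  rewrite (is_glb_Rbar_unique _ p_infty); auto. split.
  - intros x [Sx Hx]. specialize (Hmax x Sx). lra.
  - intros l _. now destruct l.
Qed.

Lemma sigma_next t x : S x -> t < x -> (forall s, S s -> t < s -> x <= s) -> sigma S t = x.
Proof.
  intros Sx Htx Hmin. unfold sigma.
  rewrite (is_glb_Rbar_unique _ (Finite x)); auto. split.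
  - intros y [Sy Hy]. simpl. auto.
  - intros l Hl. apply (Hl x). now split.
Qed.

Lemma sigma_right_dense t s0 e : sigma S t = t -> S s0 -> t < s0 -> 0 < e ->
  exists p, S p /\ t < p < t + e.
Proof.
  intros Hsig Ss0 Hts0 He.
  destruct (Glb_Rbar_finite (fun s => S s /\ t < s) s0 t) as [r [Hr _]].
  - now split.
  - intros x [_ Hx]. simpl. lra.
  - unfold sigma in Hsig. rewrite Hr in Hsig. subst r.
    destruct (Glb_Rbar_approx _ t e Hr He) as [p [[Sp Hp] Hpe]].
    exists p. auto.
Qed.

Lemma rho_left_dense t s0 e : rho S t = t -> S s0 -> s0 < t -> 0 < e ->
  exists p, S p /\ t - e < p < t.
Proof.
  intros Hrho Ss0 Hs0t He.
  destruct (Lub_Rbar_finite (fun s => S s /\ s < t) s0 t) as [r [Hr _]].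
  - now split.
  - intros x [_ Hx]. simpl. lra.
  - unfold rho in Hrho. rewrite Hr in Hrho. subst r.
    destruct (Lub_Rbar_approx _ t e Hr He) as [p [[Sp Hp] Hpe]].
    exists p. auto.
Qed.

End JumpOperators.

Section DeltaDerivative.
Variable S : R -> Prop.

(* Taking [s = t] in the definition: at a right-scattered point the delta
   derivative is the forward difference quotient. *)
Lemma delta_deriv_jump y t f : S t -> is_delta_deriv S y t f ->
  y (sigma S t) - y t = f * (sigma S t - t).
Proof.
  intros St Hy.
  set (d := Rabs (y (sigma S t) - y t - f * (sigma S t - t))).
  set (m := Rabs (sigma S t - t)).
  assert (Hm : 0 <= m) by apply Rabs_pos.
  destruct (Req_dec d 0) as [Hd0|Hd0].
  { apply Rabs_eq_0 in Hd0. lra. }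
  assert (Hd : 0 < d) by (assert (0 <= d) by apply Rabs_pos; lra).
  destruct (Hy (d / (2 * (m + 1)))) as [del [Hdel Hs]].
  { apply Rdiv_lt_0_compat; lra. }
  specialize (Hs t St). rewrite Rminus_diag, Rabs_R0 in Hs. specialize (Hs Hdel).
  fold d m in Hs.
  assert (d / (2 * (m + 1)) * m < d).
  { apply Rmult_lt_reg_r with (2 * (m + 1)); [lra|].
    replace (d / (2 * (m + 1)) * m * (2 * (m + 1))) with (d * m) by (field; lra). nra. }
  lra.
Qed.

Lemma delta_deriv_continuous y t f : S t -> is_delta_deriv S y t f ->
  forall e, 0 < e -> exists d, 0 < d /\ forall s, S s -> Rabs (s - t) < d -> Rabs (y s - y t) < e.
Proof.
  intros St Hy e He.
  pose proof (delta_deriv_jump y t f St Hy) as Hjump.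
  pose proof (sigma_ge S t) as Hsg.
  set (m := sigma S t - t) in *.
  assert (Hm : 0 <= m) by (unfold m; lra).
  set (ep := e / (2 * (m + 1))).
  assert (Hep : 0 < ep) by (apply Rdiv_lt_0_compat; lra).
  assert (Hepm : ep * (m + 1) = e / 2) by (unfold ep; field; lra).
  destruct (Hy ep Hep) as [del [Hdel Hs]].
  set (k := e / (2 * (Rabs f + 1))).
  pose proof (Rabs_pos f) as Hf0.
  assert (Hk : 0 < k) by (apply Rdiv_lt_0_compat; lra).
  assert (Hfk : Rabs f * k < e / 2).
  { apply Rmult_lt_reg_r with (2 * (Rabs f + 1)); [lra|].
    replace (Rabs f * k * (2 * (Rabs f + 1))) with (Rabs f * e) by (unfold k; field; lra). nra. }
  exists (Rmin del (Rmin 1 k)). split.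
  { apply Rmin_pos; [|apply Rmin_pos]; lra. }
  intros s Ss Hst.
  apply Rmin_Rgt in Hst as [Hst1 Hst']. apply Rmin_Rgt in Hst' as [Hst2 Hst3].
  specialize (Hs s Ss Hst1).
  replace (y (sigma S t) - y s - f * (sigma S t - s)) with (y t - y s + f * (s - t)) in Hs
    by (unfold m in Hjump; lra).
  assert (Hsig : Rabs (sigma S t - s) <= m + 1).
  { apply Rabs_le_between. apply Rabs_lt_between in Hst2. unfold m in *. lra. }
  assert (Hfs : Rabs (f * (s - t)) < e / 2).
  { rewrite Rabs_mult. pose proof (Rabs_pos (s - t)). nra. }
  replace (y s - y t) with (f * (s - t) - (y t - y s + f * (s - t))) by ring.
  eapply Rle_lt_trans; [apply Rabs_triang|]. rewrite Rabs_Ropp.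
  assert (ep * Rabs (sigma S t - s) <= e / 2) by nra.
  lra.
Qed.

Lemma delta_deriv_plus y z t f g : is_delta_deriv S y t f -> is_delta_deriv S z t g ->
  is_delta_deriv S (fun x => y x + z x) t (f + g).
Proof.
  intros Hy Hz eps He.
  destruct (Hy (eps / 2)) as [d1 [Hd1 H1]]; [lra|].
  destruct (Hz (eps / 2)) as [d2 [Hd2 H2]]; [lra|].
  exists (Rmin d1 d2). split; [now apply Rmin_pos|].
  intros s Ss Hs. apply Rmin_Rgt in Hs as [Hs1 Hs2].
  specialize (H1 s Ss Hs1). specialize (H2 s Ss Hs2).
  replace (y (sigma S t) + z (sigma S t) - (y s + z s) - (f + g) * (sigma S t - s))
    with ((y (sigma S t) - y s - f * (sigma S t - s)) + (z (sigma S t) - z s - g * (sigma S t - s)))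
    by ring.
  eapply Rle_trans; [apply Rabs_triang|]. lra.
Qed.

Lemma delta_deriv_scal y t f c : is_delta_deriv S y t f ->
  is_delta_deriv S (fun x => c * y x) t (c * f).
Proof.
  intros Hy eps He.
  pose proof (Rabs_pos c) as Hc0.
  destruct (Hy (eps / (Rabs c + 1))) as [d [Hd Hs]].
  { apply Rdiv_lt_0_compat; lra. }
  exists d. split; auto. intros s Ss Hst. specialize (Hs s Ss Hst).
  replace (c * y (sigma S t) - c * y s - c * f * (sigma S t - s))
    with (c * (y (sigma S t) - y s - f * (sigma S t - s))) by ring.
  rewrite Rabs_mult.
  assert (Hq : Rabs c * (eps / (Rabs c + 1)) <= eps).
  { apply Rmult_le_reg_r with (Rabs c + 1); [lra|].
    replace (Rabs c * (eps / (Rabs c + 1)) * (Rabs c + 1)) with (Rabs c * eps) by (field; lra).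
    nra. }
  pose proof (Rabs_pos (sigma S t - s)).
  pose proof (Rabs_pos (y (sigma S t) - y s - f * (sigma S t - s))).
  nra.
Qed.

Lemma delta_deriv_linear t c : is_delta_deriv S (fun x => c * x) t c.
Proof.
  intros eps He. exists 1. split; [lra|]. intros s _ _.
  replace (c * sigma S t - c * s - c * (sigma S t - s)) with 0 by ring.
  rewrite Rabs_R0. pose proof (Rabs_pos (sigma S t - s)). nra.
Qed.

End DeltaDerivative.

Section TimeScaleInduction.
Variables (T : R -> Prop) (a b : R).
Hypotheses (HT : closed T) (Ta : T a).

Let S := tsI T a b.

Lemma tsI_induction (P : R -> Prop) :
  P a ->
  (forall t, S t -> t < b -> t < sigma S t -> P t -> P (sigma S t)) ->
  (forall t, S t -> t < b -> sigma S t = t -> P t ->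
     exists d, 0 < d /\ forall s, S s -> t < s < t + d -> P s) ->
  (forall t, S t -> a < t -> rho S t = t -> (forall s, S s -> s < t -> P s) -> P t) ->
  forall t, S t -> P t.
Proof.
  intros Pa Hscattered Hright Hleft t0 St0. apply NNPP. intros nPt0.
  set (A := fun x => S x /\ ~ P x).
  destruct (Glb_Rbar_finite A t0 a) as [s0 [Hs0 [Has0 Hs0t0]]].
  { now split. }
  { intros x [[_ Hx] _]. simpl. lra. }
  assert (Ss0 : S s0).
  { split; [apply (closed_Glb_Rbar T A s0 HT); [intros x [[]]|]; auto|].
    destruct St0 as [_ Ht0]. lra. }
  assert (Hbelow : forall s, S s -> s < s0 -> P s).
  { intros s Ss Hs. apply NNPP. intros nPs.
    pose proof (Glb_Rbar_le A s0 s Hs0 (conj Ss nPs)). lra. }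
  destruct (classic (P s0)) as [Ps0|nPs0].
  - assert (Hs0A : forall x, A x -> s0 < x).
    { intros x [Sx nPx]. pose proof (Glb_Rbar_le A s0 x Hs0 (conj Sx nPx)).
      destruct (Req_dec s0 x) as [->|]; [contradiction|lra]. }
    assert (Hs0b : s0 < b) by (pose proof (Hs0A t0 (conj St0 nPt0)); destruct St0; lra).
    assert (Hsig : sigma S s0 = s0).
    { pose proof (sigma_ge S s0). apply Rle_antisym; [|lra]. apply Rnot_lt_le. intros Hlt.
      destruct (Glb_Rbar_approx A s0 (sigma S s0 - s0) Hs0) as [x [Ax Hx]]; [lra|].
      pose proof (sigma_le S s0 x (proj1 Ax) (Hs0A x Ax)). lra. }
    destruct (Hright s0 Ss0 Hs0b Hsig Ps0) as [d [Hd Hnear]].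
    destruct (Glb_Rbar_approx A s0 d Hs0 Hd) as [x [Ax Hx]].
    apply (proj2 Ax), Hnear; [apply Ax|]. pose proof (Hs0A x Ax). lra.
  - assert (Has : a < s0) by (destruct (Req_dec a s0) as [<-|]; [contradiction|lra]).
    destruct (Lub_Rbar_finite (fun u => S u /\ u < s0) a s0) as [r [Hr [Har Hrs0]]].
    { split; [split; [auto|destruct Ss0]|]; lra. }
    { intros x [_ Hx]. simpl. lra. }
    assert (Sr : S r).
    { split; [apply (closed_Lub_Rbar T (fun u => S u /\ u < s0) r HT); [intros x [[]]|]; auto|].
      destruct Ss0. lra. }
    destruct (Rle_lt_or_eq_dec r s0 Hrs0) as [Hlt|<-].
    + assert (Hsig : sigma S r = s0).
      { apply sigma_next; auto. intros s Ss Hrs. apply Rnot_lt_le. intros Hss0.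
        pose proof (Lub_Rbar_ge _ r s Hr (conj Ss Hss0)). lra. }
      apply nPs0. rewrite <- Hsig. apply Hscattered; [auto| destruct Ss0; lra | lra |].
      now apply Hbelow.
    + apply nPs0, Hleft; auto. unfold rho. fold S. now rewrite Hr.
Qed.

(* The slack [eps * (t - a)] is what makes the right-dense step work even when
   the delta derivative vanishes there. *)
Lemma delta_deriv_nonneg_lower_bound H eps :
  (forall t, kappa T a b t -> exists f, is_delta_deriv S H t f /\ 0 <= f) -> 0 < eps ->
  forall t, S t -> H a - eps * (t - a) <= H t.
Proof.
  intros HD Heps. apply tsI_induction.
  - lra.
  - intros t St Htb Hts Pt.
    destruct (HD t (conj St (or_introl Htb))) as [f [Hf Hf0]].
    pose proof (delta_deriv_jump S H t f St Hf). nra.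
  - intros t St Htb Hsig Pt.
    destruct (HD t (conj St (or_introl Htb))) as [f [Hf Hf0]].
    destruct (Hf eps Heps) as [d [Hd Hnear]].
    exists d. split; auto. intros s Ss [Hts Hsd].
    specialize (Hnear s Ss). rewrite Hsig, (Rabs_left1 (t - s)) in Hnear by lra.
    assert (Hdist : Rabs (s - t) < d) by (apply Rabs_lt_between; lra).
    apply Rabs_le_between in Hnear as [_ Hnear]; [|exact Hdist].
    assert (f * (t - s) <= 0) by nra. lra.
  - intros t St Hat Hrho Hbelow. apply Rnot_lt_le. intros Hgap.
    assert (Kt : kappa T a b t).
    { split; auto. destruct St as [_ [_ [Htb| ->]]]; [now left|now right]. }
    destruct (HD t Kt) as [f [Hf _]].
    destruct (delta_deriv_continuous S H t f St Hf (H a - eps * (t - a) - H t))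
      as [d [Hd Hcont]]; [lra|].
    assert (Sa : S a) by (destruct St as [_ Ht]; split; [auto|lra]).
    destruct (rho_left_dense S t a d Hrho Sa Hat Hd) as [p [Sp Hp]].
    specialize (Hbelow p Sp (proj2 Hp)).
    assert (Hdist : Rabs (p - t) < d) by (apply Rabs_lt_between; lra).
    specialize (Hcont p Sp Hdist). apply Rabs_lt_between in Hcont. nra.
Qed.

Lemma delta_deriv_nonneg_le H : T b -> a <= b ->
  (forall t, kappa T a b t -> exists f, is_delta_deriv S H t f /\ 0 <= f) ->
  H a <= H b.
Proof.
  intros Tb Hab HD. apply Rnot_lt_le. intros Hlt.
  destruct (Rle_lt_or_eq_dec a b Hab) as [Hab'|<-]; [|lra].
  set (eps := (H a - H b) / (2 * (b - a))).
  assert (Heps : 0 < eps) by (apply Rdiv_lt_0_compat; lra).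
  pose proof (delta_deriv_nonneg_lower_bound H eps HD Heps b (conj Tb (conj Hab (Rle_refl b)))).
  assert (eps * (b - a) = (H a - H b) / 2) by (unfold eps; field; lra).
  lra.
Qed.

End TimeScaleInduction.

(* [Gslope phi u w] is the mean of [phi] over the segment [w, u]; with
   [u = y (sigma t)] and [w = y t] it is the inner integral of the functional,
   and it is the difference quotient of [G phi] (see [G_sub]). *)
Definition Gslope (phi : R -> R) (u w : R) : R := RInt (fun h => phi (w + h * (u - w))) 0 1.

Lemma Rabs_convex_comb h p q : 0 <= h <= 1 ->
  Rabs ((1 - h) * p + h * q) <= (1 - h) * Rabs p + h * Rabs q.
Proof.
  intros Hh. eapply Rle_trans; [apply Rabs_triang|].
  rewrite !Rabs_mult, (Rabs_right (1 - h)), (Rabs_right h) by lra. lra.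
Qed.

Section Primitive.
Variable phi : R -> R.
Hypothesis phi_pos : forall x, 0 < phi x.
Hypothesis phi_cont : forall x, continuous phi x.

Lemma continuous_on_segment u w x : continuous (fun h => phi (w + h * (u - w))) x.
Proof.
  apply (continuous_comp (fun h => w + h * (u - w)) phi); [|apply phi_cont].
  apply (continuous_plus (fun _ => w) (fun h => h * (u - w))); [apply continuous_const|].
  apply (continuous_mult (fun h => h) (fun _ => u - w)); [apply continuous_id|apply continuous_const].
Qed.

Lemma ex_RInt_on_segment u w c d : ex_RInt (fun h => phi (w + h * (u - w))) c d.
Proof. apply (ex_RInt_continuous (V := R_CompleteNormedModule)). intros; apply continuous_on_segment. Qed.

Lemma ex_RInt_phi c d : ex_RInt phi c d.
Proof. apply (ex_RInt_continuous (V := R_CompleteNormedModule)). intros; apply phi_cont. Qed.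

Lemma Gslope_pos u w : 0 < Gslope phi u w.
Proof.
  apply RInt_gt_0; [lra| |]; intros; [apply phi_pos|apply continuous_on_segment].
Qed.

Lemma G_sub u w : G phi u - G phi w = Gslope phi u w * (u - w).
Proof.
  unfold G, Gslope.
  assert (Hchasles : RInt phi 0 u - RInt phi 0 w = RInt phi w u).
  { pose proof (RInt_Chasles phi 0 w u (ex_RInt_phi _ _) (ex_RInt_phi _ _)) as Hch.
    change (RInt phi 0 w + RInt phi w u = RInt phi 0 u) in Hch. lra. }
  rewrite Hchasles.
  replace (RInt phi w u) with (RInt phi ((u - w) * 0 + w) ((u - w) * 1 + w)) by (f_equal; ring).
  rewrite <- (RInt_comp_lin phi (u - w) w 0 1) by apply ex_RInt_phi.
  rewrite (RInt_ext _ (fun h => scal (u - w) (phi (w + h * (u - w))))).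
  2:{ intros h _. do 2 f_equal. ring. }
  rewrite (RInt_scal (V := R_CompleteNormedModule)) by apply ex_RInt_on_segment.
  change (scal (u - w) ?I) with ((u - w) * I). ring.
Qed.

Lemma G_0 : G phi 0 = 0.
Proof. unfold G. rewrite RInt_point. reflexivity. Qed.

Lemma G_lt w u : w < u -> G phi w < G phi u.
Proof. intros Hwu. pose proof (G_sub u w). pose proof (Gslope_pos u w). nra. Qed.

Lemma G_le w u : w <= u -> G phi w <= G phi u.
Proof. intros [Hwu| ->]; [now apply Rlt_le, G_lt|lra]. Qed.

Lemma G_continuous : continuity (G phi).
Proof.
  intros x. apply continuity_pt_filterlim.
  apply (continuous_RInt_1 phi 0 x (G phi)).
  apply filter_forall. intros z. apply (RInt_correct (V := R_CompleteNormedModule)), ex_RInt_phi.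
Qed.

(* Uniform continuity of [phi] on a compact interval containing all the segments involved. *)
Lemma Gslope_continuous u0 w0 e : 0 < e -> exists d, 0 < d /\ forall u w,
  Rabs (u - u0) < d -> Rabs (w - w0) < d -> Rabs (Gslope phi u w - Gslope phi u0 w0) < e.
Proof.
  intros He.
  set (K := Rabs u0 + Rabs w0 + 1).
  assert (Hunif : uniform_continuity phi (fun x => - K <= x <= K)).
  { apply Heine; [apply compact_P3|]. intros x _. apply continuity_pt_filterlim, phi_cont. }
  destruct (Hunif (mkposreal (e / 2) ltac:(lra))) as [del Hdel]. simpl in Hdel.
  exists (Rmin 1 del). split; [apply Rmin_pos; [lra|apply cond_pos]|].
  intros u w Hu Hw.
  set (m := Rmax (Rabs (u - u0)) (Rabs (w - w0))).
  assert (Hm1 : m < 1) by (apply Rmax_lub_lt; eapply Rlt_le_trans; eauto; apply Rmin_l).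
  assert (Hmdel : m < del) by (apply Rmax_lub_lt; eapply Rlt_le_trans; eauto; apply Rmin_r).
  assert (Hdiff : Gslope phi u w - Gslope phi u0 w0
    = RInt (fun h => phi (w + h * (u - w)) - phi (w0 + h * (u0 - w0))) 0 1).
  { symmetry. apply (RInt_minus (fun h => phi (w + h * (u - w))) (fun h => phi (w0 + h * (u0 - w0))));
      apply ex_RInt_on_segment. }
  rewrite Hdiff.
  eapply Rle_lt_trans; [apply (abs_RInt_le_const _ 0 1 (e / 2))|lra]; [lra| |].
  { apply (ex_RInt_minus (fun h => phi (w + h * (u - w))) (fun h => phi (w0 + h * (u0 - w0))));
      apply ex_RInt_on_segment. }
  intros h Hh.
  set (x := w + h * (u - w)). set (x0 := w0 + h * (u0 - w0)).
  assert (Hxx0 : Rabs (x - x0) <= m).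
  { replace (x - x0) with ((1 - h) * (w - w0) + h * (u - u0)) by (unfold x, x0; ring).
    eapply Rle_trans; [now apply Rabs_convex_comb|].
    pose proof (Rmax_l (Rabs (u - u0)) (Rabs (w - w0))) as Hmu.
    pose proof (Rmax_r (Rabs (u - u0)) (Rabs (w - w0))) as Hmw. fold m in Hmu, Hmw. nra. }
  assert (Hx0 : Rabs x0 <= Rabs u0 + Rabs w0).
  { replace x0 with ((1 - h) * w0 + h * u0) by (unfold x0; ring).
    eapply Rle_trans; [now apply Rabs_convex_comb|].
    pose proof (Rabs_pos u0). pose proof (Rabs_pos w0). nra. }
  assert (Hx : Rabs x <= K).
  { replace x with (x0 + (x - x0)) by ring.
    eapply Rle_trans; [apply Rabs_triang|]. unfold K. lra. }
  apply Rlt_le, Hdel; [apply Rabs_le_between; exact Hx|apply Rabs_le_between; unfold K; lra|lra].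
Qed.

Lemma Gslope_inv_continuous u0 w0 e : 0 < e -> exists d, 0 < d /\ forall u w,
  Rabs (u - u0) < d -> Rabs (w - w0) < d -> Rabs (/ Gslope phi u w - / Gslope phi u0 w0) < e.
Proof.
  intros He.
  set (q0 := Gslope phi u0 w0). assert (Hq0 : 0 < q0) by apply Gslope_pos.
  destruct (Gslope_continuous u0 w0 (Rmin (q0 / 2) (e * q0 * q0 / 2))) as [d [Hd Hq]].
  { apply Rmin_pos; [lra|]. apply Rdiv_lt_0_compat; [|lra]. repeat apply Rmult_lt_0_compat; auto. }
  exists d. split; auto. intros u w Hu Hw.
  specialize (Hq u w Hu Hw). fold q0 in Hq.
  set (q := Gslope phi u w) in *.
  apply Rmin_Rgt in Hq as [Hqa Hqb].
  apply Rabs_lt_between in Hqa, Hqb.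
  replace (/ q - / q0) with ((q0 - q) / (q * q0)) by (field; lra).
  assert (Hqq0 : 0 < q * q0) by nra.
  rewrite Rabs_div, (Rabs_right (q * q0)) by lra.
  apply Rmult_lt_reg_r with (q * q0); auto.
  unfold Rdiv. rewrite Rmult_assoc, Rinv_l, Rmult_1_r by lra.
  apply Rabs_lt_between. nra.
Qed.

Lemma Ginv_spec B x : 0 < B -> 0 <= x <= G phi B ->
  0 <= Ginv phi x <= B /\ G phi (Ginv phi x) = x.
Proof.
  intros HB Hx.
  assert (Hex : exists y, 0 <= y /\ G phi y = x).
  { destruct (IVT_gen (G phi) 0 B x G_continuous) as [y [Hy Hyx]].
    { rewrite G_0. pose proof (G_lt 0 B HB). rewrite G_0 in *.
      rewrite Rmin_left, Rmax_right by lra. lra. }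
    exists y. rewrite Rmin_left in Hy by lra. split; [lra|auto]. }
  destruct (epsilon_spec (inhabits 0) (fun y => 0 <= y /\ G phi y = x) Hex) as [H0 HG].
  fold (Ginv phi x) in H0, HG.
  repeat split; auto.
  apply Rnot_lt_le. intros HBlt. pose proof (G_lt _ _ HBlt). lra.
Qed.

Lemma Ginv_G y : 0 <= y -> Ginv phi (G phi y) = y.
Proof.
  intros Hy.
  assert (Hex : exists z, 0 <= z /\ G phi z = G phi y) by (exists y; auto).
  destruct (epsilon_spec (inhabits 0) (fun z => 0 <= z /\ G phi z = G phi y) Hex) as [H0 HG].
  fold (Ginv phi (G phi y)) in H0, HG.
  destruct (Rtotal_order (Ginv phi (G phi y)) y) as [Hlt|[Heq|Hlt]]; auto;
    apply G_lt in Hlt; lra.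
Qed.

End Primitive.

Lemma exp_sub1_mul_ge0 u : 0 <= (exp u - 1) * u.
Proof.
  destruct (Rle_or_lt 0 u) as [Hu|Hu].
  - pose proof (exp_ineq1_le u). nra.
  - pose proof (exp_increasing u 0 Hu). rewrite exp_0 in *. nra.
Qed.

Lemma ln_mul_sub1_pos c : 0 < c -> c <> 1 -> 0 < ln c * (c - 1).
Proof.
  intros Hc Hc1.
  destruct (Rtotal_order c 1) as [Hlt|[|Hgt]]; [|contradiction|].
  - pose proof (ln_increasing c 1 Hc Hlt). rewrite ln_1 in *. nra.
  - pose proof (ln_increasing 1 c ltac:(lra) Hgt). rewrite ln_1 in *. nra.
Qed.

Lemma Rpower_1_base beta : Rpower 1 beta = 1.
Proof. unfold Rpower. now rewrite ln_1, Rmult_0_r, exp_0. Qed.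

Lemma Rpower_sub1_sign c beta : 0 < c -> 0 <= beta * (c - 1) * (Rpower c beta - 1).
Proof.
  intros Hc. destruct (Req_dec c 1) as [->|Hc1]; [lra|].
  pose proof (exp_sub1_mul_ge0 (beta * ln c)) as Hexp.
  pose proof (ln_mul_sub1_pos c Hc Hc1) as Hln.
  unfold Rpower.
  assert (0 <= (beta * (c - 1) * (exp (beta * ln c) - 1)) * (ln c * (c - 1))).
  { replace ((beta * (c - 1) * (exp (beta * ln c) - 1)) * (ln c * (c - 1)))
      with ((exp (beta * ln c) - 1) * (beta * ln c) * ((c - 1) * (c - 1))) by ring.
    apply Rmult_le_pos; [exact Hexp|nra]. }
  nra.
Qed.

Lemma is_derive_Rpower_sub al z : 0 < z ->
  is_derive (fun z => Rpower z al - al * z) z (al * Rpower z (al - 1) - al).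
Proof.
  intros Hz. apply is_derive_Reals.
  replace (al * Rpower z (al - 1) - al) with (al * Rpower z (al - 1) - al * 1) by ring.
  change (derivable_pt_lim (minus_fct (fun z => Rpower z al) (mult_real_fct al id)) z
    (al * Rpower z (al - 1) - al * 1)).
  apply derivable_pt_lim_minus.
  - now apply derivable_pt_lim_power.
  - apply derivable_pt_lim_scal, derivable_pt_lim_id.
Qed.

Lemma Rpower_tangent_sign al x : 0 < x ->
  0 <= al * (al - 1) * (Rpower x al - 1 - al * (x - 1)).
Proof.
  intros Hx.
  destruct (MVT_gen (fun z => Rpower z al - al * z) 1 x (fun z => al * Rpower z (al - 1) - al))
    as [c [Hc Hmvt]].
  - intros z Hz. apply is_derive_Rpower_sub.
    pose proof (Rmin_glb_lt 1 x 0 ltac:(lra) Hx). lra.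
  - intros z Hz. apply continuity_pt_filterlim.
    apply (ex_derive_continuous (K := R_AbsRing) (V := R_NormedModule) (fun z => Rpower z al - al * z)).
    eexists. apply is_derive_Rpower_sub.
    pose proof (Rmin_glb_lt 1 x 0 ltac:(lra) Hx). lra.
  - rewrite Rpower_1_base in Hmvt.
    replace (Rpower x al - 1 - al * (x - 1)) with (al * (Rpower c (al - 1) - 1) * (x - 1)) by lra.
    assert (Hc0 : 0 < c) by (pose proof (Rmin_glb_lt 1 x 0 ltac:(lra) Hx); lra).
    assert (Hsign : 0 <= (al - 1) * (Rpower c (al - 1) - 1) * (x - 1)).
    { destruct (Req_dec c 1) as [->|Hc1]; [rewrite Rpower_1_base; lra|].
      set (E := Rpower c (al - 1)).
      pose proof (Rpower_sub1_sign c (al - 1) Hc0) as Hs. fold E in Hs.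
      assert (Hcx : 0 < (c - 1) * (x - 1)).
      { destruct (Rle_or_lt 1 x) as [Hx1|Hx1].
        - rewrite Rmin_left, Rmax_right in Hc by lra. nra.
        - rewrite Rmin_right, Rmax_left in Hc by lra. nra. }
      apply (Rmult_le_reg_r ((c - 1) * (c - 1))); [nra|].
      replace ((al - 1) * (E - 1) * (x - 1) * ((c - 1) * (c - 1)))
        with ((al - 1) * (c - 1) * (E - 1) * ((c - 1) * (x - 1))) by ring.
      rewrite Rmult_0_l. apply Rmult_le_pos; lra. }
    replace (al * (al - 1) * (al * (Rpower c (al - 1) - 1) * (x - 1)))
      with ((al * al) * ((al - 1) * (Rpower c (al - 1) - 1) * (x - 1))) by ring.
    apply Rmult_le_pos; [nra|exact Hsign].
Qed.

Lemma Rpower_tangent_sign_at al P C : 0 < P -> 0 < C ->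
  0 <= al * (al - 1) * (Rpower P al - Rpower C al - al * Rpower C al / C * (P - C)).
Proof.
  intros HP HC.
  assert (HPC : 0 < P / C) by (apply Rdiv_lt_0_compat; auto).
  assert (HCal : 0 < Rpower C al) by apply exp_pos.
  assert (HPow : Rpower P al = Rpower C al * Rpower (P / C) al).
  { rewrite Rpower_mult_distr by auto. f_equal. field. lra. }
  rewrite HPow.
  replace (al * (al - 1) * (Rpower C al * Rpower (P / C) al - Rpower C al - al * Rpower C al / C * (P - C)))
    with (Rpower C al * (al * (al - 1) * (Rpower (P / C) al - 1 - al * (P / C - 1)))) by (field; lra).
  apply Rmult_le_pos; [lra|]. now apply Rpower_tangent_sign.
Qed.

Lemma sigma_tsI_bounds (T : R -> Prop) a b t : T b -> tsI T a b t ->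
  t <= sigma (tsI T a b) t <= b.
Proof.
  intros Tb [Tt [Hat [Htb| ->]]]; split; try apply sigma_ge.
  - apply sigma_le; [split; [auto|lra]|auto].
  - rewrite sigma_max; [lra|]. now intros s [_ []].
Qed.

Lemma delta_deriv_factor (S : R -> Prop) y z q t f q0 :
  is_delta_deriv S y t f ->
  (forall s, S s -> z (sigma S t) - z s = q s * (y (sigma S t) - y s)) ->
  (forall e, 0 < e -> exists d, 0 < d /\ forall s, S s -> Rabs (s - t) < d -> Rabs (q s - q0) < e) ->
  is_delta_deriv S z t (q0 * f).
Proof.
  intros Hy Hzq Hq eps Heps.
  pose proof (Rabs_pos f) as Hf0. pose proof (Rabs_pos q0) as Hq00.
  set (e1 := eps / (2 * (Rabs q0 + 1))).
  assert (He1 : (Rabs q0 + 1) * e1 = eps / 2) by (unfold e1; field; lra).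
  set (e2 := Rmin 1 (eps / (2 * (Rabs f + 1)))).
  assert (He2_1 : e2 <= 1) by apply Rmin_l.
  assert (He2 : 0 < e2) by (apply Rmin_pos; [lra|apply Rdiv_lt_0_compat; lra]).
  assert (He2f : e2 * Rabs f <= eps / 2).
  { apply Rle_trans with (eps / (2 * (Rabs f + 1)) * Rabs f).
    - apply Rmult_le_compat_r; [lra|apply Rmin_r].
    - apply Rmult_le_reg_r with (2 * (Rabs f + 1)); [lra|].
      replace (eps / (2 * (Rabs f + 1)) * Rabs f * (2 * (Rabs f + 1))) with (eps * Rabs f)
        by (field; lra). nra. }
  destruct (Hy e1) as [d1 [Hd1 H1]]; [apply Rdiv_lt_0_compat; lra|].
  destruct (Hq e2 He2) as [d2 [Hd2 H2]].
  exists (Rmin d1 d2). split; [now apply Rmin_pos|].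
  intros s Ss Hst. apply Rmin_Rgt in Hst as [Hst1 Hst2].
  specialize (H1 s Ss Hst1). specialize (H2 s Ss Hst2).
  assert (Hqs : Rabs (q s) <= Rabs q0 + 1).
  { replace (q s) with (q0 + (q s - q0)) by ring.
    eapply Rle_trans; [apply Rabs_triang|]. lra. }
  rewrite Hzq by exact Ss.
  replace (q s * (y (sigma S t) - y s) - q0 * f * (sigma S t - s))
    with (q s * (y (sigma S t) - y s - f * (sigma S t - s)) + (q s - q0) * f * (sigma S t - s))
    by ring.
  eapply Rle_trans; [apply Rabs_triang|]. rewrite !Rabs_mult.
  set (A := Rabs (y (sigma S t) - y s - f * (sigma S t - s))) in *.
  set (Z := Rabs (sigma S t - s)) in *.
  assert (HZ : 0 <= Z) by apply Rabs_pos.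
  assert (HA : 0 <= A) by apply Rabs_pos.
  pose proof (Rabs_pos (q s)). pose proof (Rabs_pos (q s - q0)).
  assert (Rabs (q s) * A <= (Rabs q0 + 1) * (e1 * Z)) by (apply Rmult_le_compat; lra).
  assert (Rabs (q s - q0) * Rabs f * Z <= e2 * Rabs f * Z).
  { apply Rmult_le_compat_r; [lra|]. apply Rmult_le_compat_r; lra. }
  nra.
Qed.

Section ChainRule.
Variable phi : R -> R.
Hypothesis phi_cont : forall x, continuous phi x.

Lemma delta_deriv_G_comp (S : R -> Prop) y t f : S t -> is_delta_deriv S y t f ->
  is_delta_deriv S (fun x => G phi (y x)) t (Gslope phi (y (sigma S t)) (y t) * f).
Proof.
  intros St Hy. apply (delta_deriv_factor S y _ (fun s => Gslope phi (y (sigma S t)) (y s))); auto.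
  - intros s _. apply G_sub; auto.
  - intros e He.
    destruct (Gslope_continuous phi phi_cont (y (sigma S t)) (y t) e He) as [d1 [Hd1 Hq]].
    destruct (delta_deriv_continuous S y t f St Hy d1 Hd1) as [d2 [Hd2 Hcont]].
    exists d2. split; auto. intros s Ss Hst.
    apply Hq; [rewrite Rminus_diag, Rabs_R0; auto|now apply Hcont].
Qed.

Lemma integrand_eq_Gslope (T : R -> Prop) a b alpha y yd t :
  tsI T a b t -> is_delta_deriv (tsI T a b) y t (yd t) ->
  integrand T a b alpha phi y yd t
  = Rpower (Gslope phi (y (sigma (tsI T a b) t)) (y t) * yd t) alpha.
Proof.
  intros St Hy. unfold integrand. f_equal. f_equal. unfold Gslope. apply RInt_ext.
  intros h _. f_equal. unfold mu.
  rewrite (delta_deriv_jump _ y t (yd t) St Hy). ring.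
Qed.

End ChainRule.

Lemma Rabs_mult_lt c x e : 0 < c -> Rabs x < e / c -> Rabs (c * x) < e.
Proof.
  intros Hc Hx. rewrite Rabs_mult, Rabs_right by lra.
  apply Rmult_lt_reg_l with (/ c); [now apply Rinv_0_lt_compat|].
  rewrite <- Rmult_assoc, Rinv_l, Rmult_1_l by lra.
  replace (/ c * e) with (e / c) by (field; lra). exact Hx.
Qed.

Section Extremal.
Variables (T : R -> Prop) (a b B : R) (phi : R -> R) (C : R).
Hypotheses (HT : closed T) (Ta : T a) (Tb : T b) (Hab : a < b) (HB : 0 < B)
  (phi_pos : forall x, 0 < phi x) (phi_cont : forall x, continuous phi x)
  (HC : C * (b - a) = G phi B).

Let S := tsI T a b.

Lemma C_pos : 0 < C.
Proof. pose proof (G_lt phi phi_pos phi_cont 0 B HB). rewrite (G_0 phi) in *. nra. Qed.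

Lemma functional_value_tangent_bound alpha y yd v :
  admissible T a b B y yd -> functional_value T a b alpha phi y yd v ->
  0 <= alpha * (alpha - 1) * (v - (b - a) * Rpower C alpha).
Proof.
  intros [Hy [_ [Hyd_pos [Hya Hyb]]]] [F [HF Hv]].
  set (k := alpha * Rpower C alpha / C).
  set (H := fun x => alpha * (alpha - 1) *
    (F x + (- k * G phi (y x) + (k * C - Rpower C alpha) * x))).
  assert (HHab : H a <= H b).
  { apply (delta_deriv_nonneg_le T a b HT Ta H Tb (Rlt_le _ _ Hab)).
    intros t Kt. pose proof (proj1 Kt) as St.
    set (P := Gslope phi (y (sigma S t)) (y t) * yd t).
    eexists. split.
    - apply delta_deriv_scal, delta_deriv_plus; [now apply HF|].
      apply delta_deriv_plus; [|apply delta_deriv_linear].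
      apply delta_deriv_scal, delta_deriv_G_comp; auto.
    - rewrite (integrand_eq_Gslope phi T a b alpha y yd t St (Hy t Kt)).
      fold S P.
      assert (HP : 0 < P).
      { apply Rmult_lt_0_compat; [apply Gslope_pos|apply Hyd_pos]; auto. }
      pose proof (Rpower_tangent_sign_at alpha P C HP C_pos) as Htan. fold k in Htan.
      replace (alpha * (alpha - 1) * (Rpower P alpha + (- k * P + (k * C - Rpower C alpha))))
        with (alpha * (alpha - 1) * (Rpower P alpha - Rpower C alpha - k * (P - C))) by ring.
      exact Htan. }
  unfold H in HHab. rewrite Hya, Hyb, (G_0 phi), <- HC in HHab.
  rewrite Hv. nra.
Qed.

Let y0 := fun t => Ginv phi (C * (t - a)).
Let yd0 := fun t => C / Gslope phi (y0 (sigma S t)) (y0 t).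

Lemma G_y0 t : a <= t <= b -> 0 <= y0 t <= B /\ G phi (y0 t) = C * (t - a).
Proof.
  intros Ht. apply Ginv_spec; auto.
  pose proof C_pos. rewrite <- HC. split; nra.
Qed.

Lemma y0_a : y0 a = 0.
Proof. unfold y0. rewrite Rminus_diag, Rmult_0_r, <- (G_0 phi) at 1. apply Ginv_G; auto; lra. Qed.

Lemma y0_b : y0 b = B.
Proof. unfold y0. rewrite HC. apply Ginv_G; auto; lra. Qed.

Lemma y0_continuous t e : a <= t <= b -> 0 < e -> exists d, 0 < d /\
  forall s, a <= s <= b -> Rabs (s - t) < d -> Rabs (y0 s - y0 t) < e.
Proof.
  intros Ht He. pose proof C_pos as HC0.
  set (u := y0 t).
  pose proof (G_lt phi phi_pos phi_cont u (u + e) ltac:(lra)).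
  pose proof (G_lt phi phi_pos phi_cont (u - e) u ltac:(lra)).
  set (g := Rmin (G phi (u + e) - G phi u) (G phi u - G phi (u - e))).
  assert (Hg : 0 < g) by (apply Rmin_pos; lra).
  assert (Hg1 : g <= G phi (u + e) - G phi u) by apply Rmin_l.
  assert (Hg2 : g <= G phi u - G phi (u - e)) by apply Rmin_r.
  exists (g / C). split; [now apply Rdiv_lt_0_compat|].
  intros s Hs Hst.
  destruct (G_y0 t Ht) as [_ Gt]. destruct (G_y0 s Hs) as [_ Gs]. fold u in Gt.
  apply Rabs_lt_between in Hst.
  assert (Hgap : - g < C * (s - t) < g).
  { replace g with (g / C * C) by (field; lra). split; nra. }
  apply Rabs_lt_between. split; apply Rnot_le_lt; intros Hle.
  - pose proof (G_le phi phi_pos phi_cont (y0 s) (u - e) ltac:(lra)). lra.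
  - pose proof (G_le phi phi_pos phi_cont (u + e) (y0 s) ltac:(lra)). lra.
Qed.

Lemma y0_sub u t : a <= u <= b -> a <= t <= b ->
  y0 u - y0 t = C / Gslope phi (y0 u) (y0 t) * (u - t).
Proof.
  intros Hu Ht. destruct (G_y0 u Hu) as [_ Gu]. destruct (G_y0 t Ht) as [_ Gt].
  pose proof (G_sub phi phi_cont (y0 u) (y0 t)).
  pose proof (Gslope_pos phi phi_pos phi_cont (y0 u) (y0 t)).
  field_simplify; [|lra]. apply Rmult_eq_reg_r with (Gslope phi (y0 u) (y0 t)); [|lra].
  field_simplify; lra.
Qed.

Lemma yd0_near t e : a <= t <= b -> 0 < e -> exists d, 0 < d /\ forall s,
  a <= s <= b -> a <= sigma S s <= b -> Rabs (s - t) < d -> Rabs (sigma S s - t) < d ->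
  Rabs (yd0 s - C / Gslope phi (y0 t) (y0 t)) < e.
Proof.
  intros Ht He. pose proof C_pos as HC0.
  destruct (Gslope_inv_continuous phi phi_pos phi_cont (y0 t) (y0 t) (e / C)) as [d1 [Hd1 Hq]].
  { now apply Rdiv_lt_0_compat. }
  destruct (y0_continuous t d1 Ht Hd1) as [d2 [Hd2 Hy0]].
  exists d2. split; auto. intros s Hs Hsig Hst Hsigt.
  specialize (Hq _ _ (Hy0 _ Hsig Hsigt) (Hy0 _ Hs Hst)).
  unfold yd0, Rdiv. rewrite <- Rmult_minus_distr_l. now apply Rabs_mult_lt.
Qed.

Lemma y0_delta_deriv t : kappa T a b t -> is_delta_deriv S y0 t (yd0 t).
Proof.
  intros [St _]. pose proof (sigma_tsI_bounds T a b t Tb St) as Hsig. fold S in Hsig.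
  destruct St as [Tt Ht].
  rewrite <- (Rmult_1_r (yd0 t)).
  apply (delta_deriv_factor S (fun x => 1 * x) y0 (fun s => C / Gslope phi (y0 (sigma S t)) (y0 s))).
  - apply delta_deriv_linear.
  - intros s [_ Hs]. rewrite y0_sub by lra. ring.
  - intros e He. pose proof C_pos as HC0.
    destruct (Gslope_inv_continuous phi phi_pos phi_cont (y0 (sigma S t)) (y0 t) (e / C))
      as [d1 [Hd1 Hq]]; [now apply Rdiv_lt_0_compat|].
    destruct (y0_continuous t d1 Ht Hd1) as [d2 [Hd2 Hy0]].
    exists d2. split; auto. intros s [_ Hs] Hst.
    specialize (Hq (y0 (sigma S t)) (y0 s)). rewrite Rminus_diag, Rabs_R0 in Hq.
    specialize (Hq Hd1 (Hy0 s Hs Hst)).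
    unfold yd0, Rdiv. rewrite <- Rmult_minus_distr_l. now apply Rabs_mult_lt.
Qed.

Lemma yd0_rd_continuous : rd_continuous S (kappa T a b) a b yd0.
Proof.
  intros t [St _]. split.
  - intros [Htb Hsigt] e He.
    assert (Hyd0t : yd0 t = C / Gslope phi (y0 t) (y0 t)) by (unfold yd0; now rewrite Hsigt).
    destruct (yd0_near t e (proj2 St) He) as [d [Hd Hnear]].
    assert (Sb : S b) by (split; [auto|lra]).
    destruct (sigma_right_dense S t b d Hsigt Sb Htb Hd) as [p [Sp Hp]].
    exists (p - t). split; [lra|]. intros s [Ss _] Hst. rewrite Hyd0t.
    apply Rabs_lt_between' in Hst.
    pose proof (sigma_ge S s). pose proof (sigma_le S s p Sp ltac:(lra)).
    destruct Ss as [_ Hs]. destruct Sp as [_ Hpb].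
    apply Hnear; try apply Rabs_lt_between'; lra.
  - intros [Hat Hrho]. exists (C / Gslope phi (y0 t) (y0 t)). intros e He.
    destruct (yd0_near t e (proj2 St) He) as [d [Hd Hnear]].
    exists d. split; auto. intros s [Ss _] Hst.
    pose proof (sigma_ge S s). pose proof (sigma_le S s t St ltac:(lra)).
    destruct Ss as [_ Hs]. destruct St as [_ Ht].
    apply Hnear; try apply Rabs_lt_between'; lra.
Qed.

Lemma y0_admissible : admissible T a b B y0 yd0.
Proof.
  split; [|split; [|split; [|split]]].
  - exact y0_delta_deriv.
  - exact yd0_rd_continuous.
  - intros t _. apply Rdiv_lt_0_compat; [exact C_pos|now apply Gslope_pos].
  - exact y0_a.
  - exact y0_b.
Qed.

Lemma y0_functional_value alpha :
  functional_value T a b alpha phi y0 yd0 ((b - a) * Rpower C alpha).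
Proof.
  exists (fun t => Rpower C alpha * t). split; [|ring].
  intros t Kt. replace (integrand T a b alpha phi y0 yd0 t) with (Rpower C alpha).
  { apply delta_deriv_linear. }
  rewrite (integrand_eq_Gslope phi T a b alpha y0 yd0 t (proj1 Kt) (y0_delta_deriv t Kt)).
  fold S. unfold yd0. f_equal. field. apply Rgt_not_eq, Gslope_pos; auto.
Qed.

End Extremal.

Theorem theorem3p1 (T : R -> Prop) (a b B alpha : R) (phi : R -> R) :
  closed T -> T a -> T b -> a < b -> 0 < B ->
  (forall x, 0 < phi x) -> (forall x, continuous phi x) ->
  alpha <> 0 -> alpha <> 1 ->
  let C := RInt phi 0 B / (b - a) in
  let y0 := fun t => Ginv phi (C * (t - a)) in
  let M := (b - a) * Rpower C alpha in
  ((alpha < 0 \/ 1 < alpha) ->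
     (exists yd0, admissible T a b B y0 yd0 /\ functional_value T a b alpha phi y0 yd0 M) /\
     (forall y yd v, admissible T a b B y yd -> functional_value T a b alpha phi y yd v ->
        M <= v)) /\
  ((0 < alpha < 1) ->
     (exists yd0, admissible T a b B y0 yd0 /\ functional_value T a b alpha phi y0 yd0 M) /\
     (forall y yd v, admissible T a b B y yd -> functional_value T a b alpha phi y yd v ->
        v <= M)).
Proof.
  intros HT Ta Tb Hab HB phi_pos phi_cont _ _ C y0 M.
  assert (HC : C * (b - a) = G phi B) by (unfold C, G; field; lra).
  assert (Hextremal : exists yd0,
    admissible T a b B y0 yd0 /\ functional_value T a b alpha phi y0 yd0 M).
  { eexists. split.
    - exact (y0_admissible T a b B phi C Tb Hab HB phi_pos phi_cont HC).
    - exact (y0_functional_value T a b B phi C Tb Hab HB phi_pos phi_cont HC alpha). }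
  assert (Hbound : forall y yd v, admissible T a b B y yd ->
    functional_value T a b alpha phi y yd v -> 0 <= alpha * (alpha - 1) * (v - M)).
  { intros y yd v. exact (functional_value_tangent_bound T a b B phi C HT Ta Tb Hab HB
      phi_pos phi_cont HC alpha y yd v). }
  split; intros Halpha; split; auto; intros y yd v Hy Hv; specialize (Hbound y yd v Hy Hv).
  - assert (0 < alpha * (alpha - 1)) by (destruct Halpha; nra). nra.
  - assert (alpha * (alpha - 1) < 0) by nra. nra.
Qed.
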